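(* Let $\Phi=(A;A^*;\{E_i\}_{i=0}^d;\{E^*_i\}_{i=0}^d)$ be a Leonard system in $\mathcal A$ with eigenvalue sequence $\theta_0,\dots,\theta_d$, dual eigenvalue sequence $\theta^*_0,\dots,\theta^*_d$ and second split sequence $\phi_1,\dots,\phi_d$. Then $$\nu=\frac{\eta_d(\theta_0)\,\eta^*_d(\theta^*_0)}{\phi_1\phi_2\cdots\phi_d},\qquad\text{i.e.}\qquad \frac{1}{\mathrm{tr}(E_0E^*_0)}=\frac{\prod_{h=1}^{d}(\theta_0-\theta_h)\prod_{h=1}^d(\theta^*_0-\theta^*_h)}{\phi_1\phi_2\cdots\phi_d}.$$
   Context: Let $\mathbb K$ be a field, $d\ge 0$ an integer, and $\mathcal A$ a $\mathbb K$-algebra isomorphic to the full matrix algebra $\mathrm{Mat}_{d+1}(\mathbb K)$; $I$ is its identity. An element of $\mathcal A$ is multiplicity-free if it has $d+1$ mutually distinct eigenvalues in $\mathbb K$. If $A$ is multiplicity-free with eigenvalues $\theta_0,\dots,\theta_d$, the primitive idempotent of $A$ associated with $\theta_i$ is $E_i=\prod_{j\ne i}(A-\theta_jI)/(\theta_i-\theta_j)$. A Leonard system in $\mathcal A$ is a sequence $\Phi=(A;A^*;\{E_i\}_{i=0}^d;\{E^*_i\}_{i=0}^d)$ such that (i) $A,A^*\in\mathcal A$ are multiplicity-free; (ii) $E_0,\dots,E_d$ is an ordering of the primitive idempotents of $A$; (iii) $E^*_0,\dots,E^*_d$ is an ordering of the primitive idempotents of $A^*$; (iv) $E_iA^*E_j=0$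 if $|i-j|>1$ and $E_iA^*E_j\ne0$ if $|i-j|=1$ ($0\le i,j\le d$); (v) $E^*_iAE^*_j=0$ if $|i-j|>1$ and $E^*_iAE^*_j\ne0$ if $|i-j|=1$ ($0\le i,j\le d$). Here $A^*$ is merely notation (not an adjoint). $\theta_i$ (resp. $\theta^*_i$) is the eigenvalue of $A$ (resp. $A^*$) associated with $E_i$ (resp. $E^*_i$). The scalar $\mathrm{tr}(E_0E^*_0)$ is nonzero and $\nu$ is its inverse. First split sequence of a Leonard system $\Psi=(B;B^*;\{F_i\};\{F^*_i\})$ with eigenvalues $\sigma_i$ (for $F_i$) and dual eigenvalues $\sigma^*_i$ (for $F^*_i$): on an irreducible module $V$, $U_i=(F^*_0V+\cdots+F^*_iV)\cap(F_iV+\cdots+F_dV)$ is $1$-dimensional and, for $1\le i\le d$, an eigenspace of $(B-\sigma_{i-1}I)(B^*-\sigma^*_iI)$ with nonzero eigenvalue, denoted $\varphi_i(\Psi)$. The second split sequence of $\Phi$ is $\phi_i=\varphi_i(\Phi^{\Downarrow})$, where $\Phi^{\Downarrow}=(A;A^*;\{E_{d-i}\}_{i=0}^d;\{E^*_i\}_{i=0}^d)$ (also a Leonard system). Polynomials: $\eta_i=\prod_{h=0}^{i-1}(\lambda-\theta_{d-h})$, $\eta^*_i=\prod_{h=0}^{i-1}(\lambda-\theta^*_{d-h})$. *)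

(* The algebra \mathcal A is taken to be 'M[K]_(d.+1) itself. *)
From HB Require Import structures.
From mathcomp Require Import all_boot all_order all_algebra.
Set Implicit Arguments.
Unset Strict Implicit.
Unset Printing Implicit Defensive.
Import GRing.Theory.
Local Open Scope ring_scope.

Section Leonard.
Variables (K : fieldType) (d : nat).
Local Notation n := d.+1.
Local Notation MA := 'M[K]_n.

Definition mult_free_with (A : MA) (th : 'I_n -> K) : Prop :=
  injective th /\ forall i, eigenvalue A (th i).

Definition prim_idem (A : MA) (th : 'I_n -> K) (i : 'I_n) : MA :=
  \prod_(j < n | j != i) ((th i - th j)^-1 *: (A - (th j)%:M)).

(* Leonard system (A; A*; {E_i}; {E*_i}) where E_i = prim_idem A th i and
   E*_i = prim_idem As ths i. *)
Definition leonard_system (A As : MA) (th ths : 'I_n -> K) : Prop :=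
  [/\ mult_free_with A th & mult_free_with As ths] /\
  [/\ (forall i j : 'I_n, ((i + 1 < j)%N || (j + 1 < i)%N) ->
         prim_idem A th i *m As *m prim_idem A th j = 0),
      (forall i j : 'I_n, ((i.+1 == j)%N || (j.+1 == i)%N) ->
         prim_idem A th i *m As *m prim_idem A th j != 0),
      (forall i j : 'I_n, ((i + 1 < j)%N || (j + 1 < i)%N) ->
         prim_idem As ths i *m A *m prim_idem As ths j = 0) &
      (forall i j : 'I_n, ((i.+1 == j)%N || (j.+1 == i)%N) ->
         prim_idem As ths i *m A *m prim_idem As ths j != 0)].

(* membership of a column vector u in F_{h_1} V + ... (over the h with P h),
   V = 'cV_n the standard (irreducible) module *)
Definition in_sum_images (F : 'I_n -> MA) (P : pred 'I_n) (u : 'cV[K]_n) : Prop :=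
  exists w : 'I_n -> 'cV[K]_n, u = \sum_(h < n | P h) F h *m w h.

Definition in_U (B Bs : MA) (sig sigs : 'I_n -> K) (i : 'I_n) (u : 'cV[K]_n) : Prop :=
  in_sum_images (prim_idem Bs sigs) (fun h => (h <= i)%N) u /\
  in_sum_images (prim_idem B sig) (fun h => (i <= h)%N) u.

(* phi is the first split sequence of the Leonard system (B; B*; ...):
   for 1 <= i <= d, phi i is the eigenvalue of (B - sig_{i-1} I)(B* - sigs_i I)
   on the (1-dimensional) space U_i. *)
Definition is_first_split_seq (B Bs : MA) (sig sigs : 'I_n -> K)
    (phi : 'I_n -> K) : Prop :=
  forall i : 'I_n, (0 < i)%N ->
    exists2 u : 'cV[K]_n, u != 0 /\ in_U B Bs sig sigs i u &
      (B - (sig (inord i.-1))%:M) *m (Bs - (sigs i)%:M) *m u = phi i *: u.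

(* second split sequence: first split sequence of Phi^Down, whose
   idempotent ordering is E_d, ..., E_0 (eigenvalues th (d - i)). *)
Definition is_second_split_seq (A As : MA) (th ths : 'I_n -> K)
    (phi : 'I_n -> K) : Prop :=
  is_first_split_seq A As (fun i => th (rev_ord i)) ths phi.

End Leonard.

(* Let u_j and u*_j be eigenvectors of B and B* in a Leonard system
   (B; B*; {F_i}; {F*_i}) with eigenvalues s_j and s*_j.  The vectors
   x_i = (B - s_{i-1}) ... (B - s_0) u*_0 are triangular in both eigenbases: their
   u*_j-coordinates vanish for j > i and their u_j-coordinates for j < i, the diagonal
   ones being nonzero.  Hence x_0, ..., x_d is a basis and x_i spans U_i.  As
   (B* - s*_i) x_i lies in U_{i-1} and (B - s_{i-1}) x_{i-1} = x_i, the first split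
   sequence satisfies (s*_0 - s*_i) c_i = phi_i c_{i-1} for the u*_0-coordinate c_i of
   x_i, so c_d (s*_0 - s*_1) ... (s*_0 - s*_d) = phi_1 ... phi_d.  On the other hand
   x_d is the multiple (s_d - s_0) ... (s_d - s_{d-1}) a of u_d, a being the
   u_d-coordinate of u*_0, and tr (F_d F*_0) = a b with b the u*_0-coordinate of u_d.
   The theorem is this identity for Phi^Down, whose last idempotent is E_0. *)

From HB Require Import structures.
From mathcomp Require Import all_boot all_order all_algebra.
From mathcomp Require Import zify ring.
Set Implicit Arguments.
Unset Strict Implicit.
Unset Printing Implicit Defensive.
Import GRing.Theory.
Local Open Scope ring_scope.

Lemma eigenvalue_col (K : fieldType) (n : nat) (A : 'M[K]_n) (a : K) :
  eigenvalue A a -> exists2 v : 'cV_n, A *m v = a *: v & v != 0.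
Proof.
rewrite /eigenvalue /eigenspace kermx_eq0 row_free_unit -unitmx_tr unitmxE.
rewrite unitfE negbK => /det0P[v v_neq0].
rewrite linearB /= tr_scalar_mx mulmxBr mul_mx_scalar => /eqP.
rewrite subr_eq0 => /eqP vA.
exists v^T; last by rewrite trmx_eq0.
by rewrite -[A]trmxK -trmx_mul vA linearZ.
Qed.

Lemma eigenvalues_eigvecs (K : fieldType) n (A : 'M[K]_n) (th : 'I_n -> K) :
  (forall j, eigenvalue A (th j)) ->
  exists u : 'I_n -> 'cV[K]_n, (forall j, A *m u j = th j *: u j) /\ (forall j, u j != 0).
Proof.
move=> th_eig.
have /fin_all_exists[u uP] : forall j, exists v : 'cV[K]_n, A *m v = th j *: v /\ v != 0.
  by move=> j; have [v] := eigenvalue_col (th_eig j); exists v.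
by exists u; split=> j; case: (uP j).
Qed.

Section Coordinates.
Variables (K : fieldType) (n : nat).
Implicit Types (v : 'I_n -> 'cV[K]_n) (w : 'cV[K]_n).

Definition basis_mx v : 'M[K]_n := \matrix_(i, j) v j i 0.

Definition mxcoord v (k : 'I_n) w : K := (invmx (basis_mx v) *m w) k 0.

Fact mxcoord_is_scalar v k : scalar (mxcoord v k).
Proof. by move=> a w w'; rewrite /mxcoord mulmxDr -scalemxAr !mxE. Qed.

HB.instance Definition _ v k :=
  GRing.isLinear.Build K 'cV[K]_n K _ (mxcoord v k) (mxcoord_is_scalar v k).

Lemma basis_mx_mul v (c : 'cV_n) : basis_mx v *m c = \sum_j c j 0 *: v j.
Proof.
apply/matrixP => i k; rewrite !mxE summxE; apply: eq_bigr => j _.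
by rewrite !mxE ord1 mulrC.
Qed.

Lemma basis_mx_unit v :
  (forall c : 'I_n -> K, \sum_j c j *: v j = 0 -> forall j, c j = 0) ->
  basis_mx v \in unitmx.
Proof.
move=> free_v; rewrite unitmxE unitfE -det_tr; apply/det0P => -[c c_neq0 cv0].
case/eqP: c_neq0; apply/rowP => j; rewrite mxE.
apply: (free_v (fun i => c 0 i)).
have: basis_mx v *m c^T = 0 by rewrite -[LHS]trmxK trmx_mul trmxK cv0 trmx0.
by rewrite basis_mx_mul => cv0T; rewrite -[RHS]cv0T; apply: eq_bigr => i _; rewrite mxE.
Qed.

Lemma mxcoord_mulBscalar v (M : 'M[K]_n) c k w :
  mxcoord v k ((M - c%:M) *m w) = mxcoord v k (M *m w) - c * mxcoord v k w.
Proof. by rewrite mulmxBl mul_scalar_mx linearB linearZ. Qed.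

Section Basis.
Variable v : 'I_n -> 'cV[K]_n.
Hypothesis v_basis : basis_mx v \in unitmx.

Lemma mxcoord_comb (c : 'I_n -> K) k : mxcoord v k (\sum_j c j *: v j) = c k.
Proof.
have -> : \sum_j c j *: v j = basis_mx v *m \col_j c j.
  by rewrite basis_mx_mul; apply: eq_bigr => j _; rewrite mxE.
by rewrite /mxcoord mulKmx // mxE.
Qed.

Lemma mxcoord_expansion w : w = \sum_j mxcoord v j w *: v j.
Proof. by rewrite -basis_mx_mul mulKVmx. Qed.

Lemma mxcoord_basis j k : mxcoord v k (v j) = (k == j)%:R.
Proof.
have -> : v j = \sum_i (i == j)%:R *: v i.
  by rewrite (bigD1 j) //= eqxx scale1r big1 ?addr0 // => i /negbTE->; rewrite scale0r.
exact: mxcoord_comb.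
Qed.

Lemma mxtrace_mxcoord (M : 'M[K]_n) : \tr M = \sum_j mxcoord v j (M *m v j).
Proof.
rewrite -[in LHS](mulKVmx v_basis M) mxtrace_mulC -mulmxA.
apply: eq_bigr => j _; rewrite /mxcoord !mxE; apply: eq_bigr => k _.
by rewrite !mxE; congr (_ * _); apply: eq_bigr => l _; rewrite !mxE.
Qed.

Lemma mxcoord_mulmx (M : 'M[K]_n) k w :
  mxcoord v k (M *m w) = \sum_j mxcoord v j w * mxcoord v k (M *m v j).
Proof.
rewrite [w in LHS]mxcoord_expansion mulmx_sumr linear_sum.
by apply: eq_bigr => j _; rewrite -scalemxAr linearZ.
Qed.

Lemma mulmx_eq0_on_basis (N : 'M[K]_n) : (forall j, N *m v j = 0) -> N = 0.
Proof.
move=> Nv0; rewrite -[N](mulmxK v_basis).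
suff -> : N *m basis_mx v = 0 by rewrite mul0mx.
apply/matrixP => i j; have /matrixP/(_ i 0) := Nv0 j; rewrite !mxE => Nvj0.
by rewrite -[RHS]Nvj0; apply: eq_bigr => k _; rewrite !mxE.
Qed.

Lemma mxcoord_rebase (v' : 'I_n -> 'cV[K]_n) k w :
  mxcoord v' k w = \sum_j mxcoord v j w * mxcoord v' k (v j).
Proof.
rewrite [w in LHS]mxcoord_expansion linear_sum.
by apply: eq_bigr => j _; rewrite linearZ.
Qed.

End Basis.
End Coordinates.


Lemma uppertri_solve_ge (R : idomainType) n (a : 'I_n -> R) (g : 'I_n -> 'I_n -> R)
    (lo : nat) :
  (forall m k : 'I_n, (k < m)%N -> g m k = 0) -> (forall m, g m m != 0) ->
  (forall m : 'I_n, (lo <= m)%N -> \sum_k a k * g m k = 0) ->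
  forall k : 'I_n, (lo <= k)%N -> a k = 0.
Proof.
move=> g_upper g_diag sys k.
have [m] := ubnP (n - k); elim: m k => // m IHm k; rewrite ltnS => km lo_k.
have := sys k lo_k; rewrite (bigD1 k) //= big1 ?addr0 => [/eqP|j jk].
  by rewrite mulf_eq0 (negbTE (g_diag k)) orbF => /eqP.
have [j_lt_k|k_le_j] := ltnP j k; first by rewrite g_upper ?mulr0.
have k_lt_j : (k < j)%N by rewrite ltn_neqAle k_le_j andbT val_eqE eq_sym.
by rewrite IHm ?mul0r //; have := ltn_ord j; lia.
Qed.

Lemma lowertri_solve_lt (R : idomainType) n (a : 'I_n -> R) (g : 'I_n -> 'I_n -> R)
    (hi : nat) :
  (forall m k : 'I_n, (m < k)%N -> g m k = 0) -> (forall m, g m m != 0) ->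
  (forall m : 'I_n, (m < hi)%N -> \sum_k a k * g m k = 0) ->
  forall k : 'I_n, (k < hi)%N -> a k = 0.
Proof.
move=> g_lower g_diag sys k.
have [m] := ubnP k; elim: m k => // m IHm k; rewrite ltnS => km k_hi.
have := sys k k_hi; rewrite (bigD1 k) //= big1 ?addr0 => [/eqP|j jk].
  by rewrite mulf_eq0 (negbTE (g_diag k)) orbF => /eqP.
have [k_lt_j|j_le_k] := ltnP k j; first by rewrite g_lower ?mulr0.
have j_lt_k : (j < k)%N by rewrite ltn_neqAle j_le_k andbT val_eqE.
by rewrite IHm ?mul0r //; lia.
Qed.

Lemma prod_subr_neq0 (K : fieldType) (I : finType) (t : I -> K) (P : pred I) i :
  injective t -> ~~ P i -> \prod_(h | P h) (t i - t h) != 0.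
Proof.
move=> t_inj Pi; apply/prodf_neq0 => h Ph; rewrite subr_eq0 (inj_eq t_inj).
by apply: contraNneq Pi => ->.
Qed.

Lemma horner_mx_eigvec (K : fieldType) d (B : 'M[K]_d.+1) (a : K) (v : 'cV_d.+1)
    (p : {poly K}) :
  B *m v = a *: v -> horner_mx B p *m v = p.[a] *: v.
Proof.
move=> Bv; elim/poly_ind: p => [|p c IHp].
  by rewrite rmorph0 mul0mx horner0 scale0r.
rewrite rmorphD rmorphM /= horner_mx_X horner_mx_C hornerMXaddC mulmxDl -mulmxE.
by rewrite -mulmxA Bv -scalemxAr IHp mul_scalar_mx scalerA scalerDl mulrC.
Qed.

Lemma prim_idem_horner (K : fieldType) d (B : 'M[K]_d.+1) (t : 'I_d.+1 -> K) i :
  prim_idem B t i =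
  horner_mx B (\prod_(j < d.+1 | j != i) ((t i - t j)^-1 *: ('X - (t j)%:P))).
Proof.
rewrite rmorph_prod; apply: eq_bigr => j _.
by rewrite /= horner_mxZ rmorphB /= horner_mx_X horner_mx_C.
Qed.

Lemma prim_idem_comp (K : fieldType) d (B : 'M[K]_d.+1) (t : 'I_d.+1 -> K)
    (s : 'I_d.+1 -> 'I_d.+1) i :
  injective s -> prim_idem B (t \o s) i = prim_idem B t (s i).
Proof.
move=> s_inj; rewrite !prim_idem_horner [in RHS](reindex_inj s_inj).
by congr horner_mx; apply: eq_bigl => j; rewrite inj_eq.
Qed.

Lemma big_nat_inord_geq1 (R : Type) (idx : R) (op : Monoid.law idx) n
    (F : 'I_n.+1 -> R) :
  \big[op/idx]_(1 <= h < n.+1) F (inord h) = \big[op/idx]_(h < n.+1 | (0 < h)%N) F h.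
Proof. by rewrite big_geq_mkord; apply: eq_big => [h|h _]; rewrite ?inord_val. Qed.

Lemma big_nat_inord_lt (R : Type) (idx : R) (op : Monoid.law idx) n m
    (F : 'I_n.+1 -> R) :
  (m <= n.+1)%N ->
  \big[op/idx]_(0 <= h < m) F (inord h) = \big[op/idx]_(h < n.+1 | (h < m)%N) F h.
Proof.
move=> mn; rewrite (big_nat_widen _ _ _ _ _ mn) big_mkord.
by apply: eq_big => [h|h _]; rewrite ?inord_val.
Qed.

Section Eigenbasis.
Variables (K : fieldType) (d : nat) (B : 'M[K]_d.+1) (t : 'I_d.+1 -> K).
Variable u : 'I_d.+1 -> 'cV[K]_d.+1.
Hypotheses (t_inj : injective t) (u_eig : forall j, B *m u j = t j *: u j).
Hypothesis u_neq0 : forall j, u j != 0.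

Lemma prim_idem_eigvec k j : prim_idem B t k *m u j = (k == j)%:R *: u j.
Proof.
rewrite prim_idem_horner (horner_mx_eigvec _ (u_eig j)) horner_prod.
congr (_ *: _); under eq_bigr do rewrite hornerZ hornerXsubC.
have [<-|kj] := eqVneq k j.
  by apply: big1 => i ik; rewrite mulVf // subr_eq0 (inj_eq t_inj) eq_sym.
by rewrite (bigD1 j) 1?eq_sym //= subrr mulr0 mul0r.
Qed.

Lemma eigenbasis_unit : basis_mx u \in unitmx.
Proof.
apply: basis_mx_unit => c cu0 j; apply/eqP.
have /eqP := congr1 (mulmx (prim_idem B t j)) cu0.
rewrite mulmx0 mulmx_sumr (bigD1 j) //= big1 ?addr0 => [|i ij]; last first.
  by rewrite -scalemxAr prim_idem_eigvec eq_sym (negbTE ij) scale0r scaler0.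
by rewrite -scalemxAr prim_idem_eigvec eqxx scale1r scaler_eq0 (negbTE (u_neq0 j)) orbF.
Qed.

Lemma prim_idem_mxcoord k w : prim_idem B t k *m w = mxcoord u k w *: u k.
Proof.
rewrite [w in LHS](mxcoord_expansion eigenbasis_unit) mulmx_sumr (bigD1 k) //=.
rewrite big1 ?addr0 => [|i ik]; last first.
  by rewrite -scalemxAr prim_idem_eigvec eq_sym (negbTE ik) scale0r scaler0.
by rewrite -scalemxAr prim_idem_eigvec eqxx scale1r.
Qed.

Lemma mxcoord_eigmx k w : mxcoord u k (B *m w) = t k * mxcoord u k w.
Proof.
rewrite [w in LHS](mxcoord_expansion eigenbasis_unit) mulmx_sumr.
under eq_bigr do rewrite -scalemxAr u_eig scalerA.
by rewrite (mxcoord_comb eigenbasis_unit) mulrC.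
Qed.

Lemma mxcoord_in_sum_images (P : pred 'I_d.+1) k w :
  in_sum_images (prim_idem B t) P w -> ~~ P k -> mxcoord u k w = 0.
Proof.
move=> [w' ->] Pk; rewrite linear_sum; apply: big1 => h Ph.
rewrite prim_idem_mxcoord linearZ /= (mxcoord_basis eigenbasis_unit).
by rewrite (_ : k == h = false) ?mulr0 //; apply: contraNF Pk => /eqP->.
Qed.

Lemma prim_idem_sandwich_eq0 (M : 'M[K]_d.+1) i j :
  (prim_idem B t i *m M *m prim_idem B t j == 0) = (mxcoord u i (M *m u j) == 0).
Proof.
apply/eqP/eqP => [EME0|coord0].
  have := congr1 (mulmx^~ (u j)) EME0; rewrite mul0mx -!mulmxA prim_idem_eigvec eqxx.
  rewrite scale1r prim_idem_mxcoord => /eqP.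
  by rewrite scaler_eq0 (negbTE (u_neq0 i)) orbF => /eqP.
apply: (mulmx_eq0_on_basis eigenbasis_unit) => k; rewrite -mulmxA prim_idem_eigvec.
have [<-|_] := eqVneq j k; last by rewrite scale0r mulmx0.
by rewrite scale1r -mulmxA prim_idem_mxcoord coord0 scale0r.
Qed.

End Eigenbasis.

Section SplitBasis.
Variables (K : fieldType) (d : nat).
Local Notation n := d.+1.
Variables (B Bs : 'M[K]_n) (sig sigs : 'I_n -> K) (u us : 'I_n -> 'cV[K]_n).
Hypotheses (sig_inj : injective sig) (sigs_inj : injective sigs).
Hypotheses (u_eig : forall j, B *m u j = sig j *: u j) (u_neq0 : forall j, u j != 0).
Hypothesis us_eig : forall j, Bs *m us j = sigs j *: us j.
Hypothesis us_neq0 : forall j, us j != 0.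
Hypothesis Bs_tridiag : forall k j : 'I_n,
  ((k + 1 < j)%N || (j + 1 < k)%N) -> mxcoord u k (Bs *m u j) = 0.
Hypothesis B_tridiag : forall k j : 'I_n,
  ((k + 1 < j)%N || (j + 1 < k)%N) -> mxcoord us k (B *m us j) = 0.
Hypothesis B_subdiag : forall j k : 'I_n, (j.+1 == k)%N -> mxcoord us k (B *m us j) != 0.

Let u_basis := eigenbasis_unit sig_inj u_eig u_neq0.
Let us_basis := eigenbasis_unit sigs_inj us_eig us_neq0.
Let mxcoord_u_B := mxcoord_eigmx sig_inj u_eig u_neq0.
Let mxcoord_us_Bs := mxcoord_eigmx sigs_inj us_eig us_neq0.

Fixpoint split_vec (i : nat) : 'cV[K]_n :=
  if i is i'.+1 then (B - (sig (inord i'))%:M) *m split_vec i' else us ord0.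

Local Notation split_fam := (fun k : 'I_n => split_vec k).

Lemma split_vec_us_gt i (k : 'I_n) : (i < k)%N -> mxcoord us k (split_vec i) = 0.
Proof.
elim: i k => [|i IHi] k ik /=.
  by rewrite (mxcoord_basis us_basis); case: eqP => // k0; rewrite k0 in ik.
rewrite mxcoord_mulBscalar IHi 1?ltnW // mulr0 subr0 (mxcoord_mulmx us_basis).
apply: big1 => j _; have [ij|ji] := ltnP i j; first by rewrite IHi ?mul0r.
by rewrite B_tridiag ?mulr0 //; apply/orP; right; lia.
Qed.

Lemma split_vec_us_diag i : (i <= d)%N -> mxcoord us (inord i) (split_vec i) != 0.
Proof.
elim: i => [|i IHi] id /=.
  rewrite (mxcoord_basis us_basis) (_ : inord 0 == ord0) ?oner_neq0 //.
  by apply/eqP/val_inj; rewrite /= inordK.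
rewrite mxcoord_mulBscalar split_vec_us_gt ?inordK // mulr0 subr0.
rewrite (mxcoord_mulmx us_basis) (bigD1 (inord i)) //= big1 ?addr0 => [|j ji].
  by rewrite mulf_neq0 ?IHi 1?ltnW // B_subdiag // !inordK //; lia.
have [ij|jle] := ltnP i j; first by rewrite split_vec_us_gt ?mul0r.
have j_lt_i : (j < i)%N.
  rewrite ltn_neqAle jle andbT; apply: contra ji => /eqP ji.
  by apply/eqP/val_inj; rewrite /= inordK; lia.
by rewrite B_tridiag ?mulr0 //; apply/orP; right; rewrite inordK; lia.
Qed.

Lemma split_vec_u i j :
  mxcoord u j (split_vec i) =
  mxcoord u j (us ord0) * \prod_(0 <= h < i) (sig j - sig (inord h)).
Proof.
elim: i => [|i IHi] /=; first by rewrite big_nil mulr1.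
by rewrite mxcoord_mulBscalar mxcoord_u_B -mulrBl IHi big_nat_recr // mulrC mulrA.
Qed.

Lemma split_vec_u_lt i (j : 'I_n) : (j < i)%N -> mxcoord u j (split_vec i) = 0.
Proof.
move=> ji; rewrite split_vec_u (bigD1_seq (val j)) ?mem_index_iota ?iota_uniq //=.
by rewrite inord_val subrr mul0r mulr0.
Qed.

Lemma split_vec_basis : basis_mx split_fam \in unitmx.
Proof.
apply: basis_mx_unit => c c0 k.
apply: (uppertri_solve_ge (a := c) (g := fun m k => mxcoord us m (split_fam k)) (lo := 0))
  => //.
- by move=> m l; apply: split_vec_us_gt.
- by move=> m; have := split_vec_us_diag (ltn_ord m); rewrite inord_val.
- move=> m _; rewrite -[RHS](linear0 (mxcoord us m)) -c0 linear_sum.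
  by apply: eq_bigr => l _; rewrite linearZ.
Qed.

(* Otherwise every x_k, hence every vector, would have a zero u_j-coordinate. *)
Lemma us0_mxcoord_u_neq0 j : mxcoord u j (us ord0) != 0.
Proof.
apply/eqP => c0; have := mxcoord_basis u_basis j j; rewrite eqxx.
rewrite (mxcoord_expansion split_vec_basis (u j)) linear_sum big1.
  by move/esym/eqP; rewrite oner_eq0.
by move=> k _; rewrite linearZ /= split_vec_u c0 mul0r mulr0.
Qed.

Lemma split_vec_u_diag (j : 'I_n) : mxcoord u j (split_vec j) != 0.
Proof.
rewrite split_vec_u mulf_neq0 ?us0_mxcoord_u_neq0 // prodf_seq_neq0.
apply/allP => h; rewrite mem_index_iota => /andP[_ hj] /=.
rewrite subr_eq0 (inj_eq sig_inj) -val_eqE /= inordK ?(gtn_eqF hj) //.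
exact: ltn_trans hj _.
Qed.

Lemma split_vec_line (i : 'I_n) w :
  (forall m : 'I_n, (i < m)%N -> mxcoord us m w = 0) ->
  (forall j : 'I_n, (j < i)%N -> mxcoord u j w = 0) ->
  w = mxcoord split_fam i w *: split_vec i.
Proof.
move=> us_gt u_lt.
rewrite [w in LHS](mxcoord_expansion split_vec_basis) (bigD1 i) //=.
rewrite big1 ?addr0 // => k ki; pose a k := mxcoord split_fam k w.
suff ak0 : a k = 0 by rewrite -/(a k) ak0 scale0r.
have [ik|k_le_i] := ltnP i k.
  apply: (uppertri_solve_ge (g := fun m k => mxcoord us m (split_fam k)) (lo := i.+1))
    => //.
  - by move=> m l; apply: split_vec_us_gt.
  - by move=> m; have := split_vec_us_diag (ltn_ord m); rewrite inord_val.
  - by move=> m im; rewrite -(mxcoord_rebase split_vec_basis) us_gt.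
apply: (lowertri_solve_lt (g := fun m k => mxcoord u m (split_fam k)) (hi := i)) => //.
- by move=> m l; apply: split_vec_u_lt.
- exact: split_vec_u_diag.
- by move=> m mi; rewrite -(mxcoord_rebase split_vec_basis) u_lt.
- by rewrite ltn_neqAle k_le_i andbT val_eqE.
Qed.

Lemma in_U_mxcoord (i : 'I_n) w : in_U B Bs sig sigs i w ->
  (forall m : 'I_n, (i < m)%N -> mxcoord us m w = 0) /\
  (forall j : 'I_n, (j < i)%N -> mxcoord u j w = 0).
Proof.
case=> w_us w_u; split=> [m im|j ji].
  by apply: (mxcoord_in_sum_images sigs_inj us_eig us_neq0 w_us); rewrite -ltnNge.
by apply: (mxcoord_in_sum_images sig_inj u_eig u_neq0 w_u); rewrite -ltnNge.
Qed.

Lemma split_vec_pred (i : 'I_n) : (0 < i)%N ->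
  split_vec i = (B - (sig (inord i.-1))%:M) *m split_vec i.-1.
Proof. by case: i => -[]. Qed.

Lemma split_vec_lowering (i : 'I_n) : (0 < i)%N ->
  exists b, (Bs - (sigs i)%:M) *m split_vec i = b *: split_vec i.-1.
Proof.
move=> i_gt0; set y := _ *m _.
have i'E : (inord i.-1 : 'I_n) = i.-1 :> nat by rewrite inordK //; have := ltn_ord i; lia.
exists (mxcoord split_fam (inord i.-1) y); rewrite -[in split_vec i.-1]i'E.
apply: split_vec_line.
- move=> m; rewrite i'E mxcoord_mulBscalar mxcoord_us_Bs -mulrBl => im.
  have [->|mi] := eqVneq m i; first by rewrite subrr mul0r.
  by rewrite split_vec_us_gt ?mulr0 // ltn_neqAle eq_sym val_eqE mi; lia.
move=> j; rewrite i'E => ji.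
rewrite mxcoord_mulBscalar split_vec_u_lt ?mulr0 ?subr0; last by lia.
rewrite (mxcoord_mulmx u_basis); apply: big1 => k _.
have [ki|ik] := ltnP k i; first by rewrite split_vec_u_lt ?mul0r.
by rewrite Bs_tridiag ?mulr0 //; apply/orP; left; lia.
Qed.

Lemma split_vec_neq0 (i : 'I_n) : split_vec i != 0.
Proof. by apply: contraNneq (split_vec_u_diag i) => ->; rewrite linear0. Qed.

Lemma split_seq_step (phi : K) (i : 'I_n) : (0 < i)%N ->
  (exists2 w, w != 0 /\ in_U B Bs sig sigs i w &
     (B - (sig (inord i.-1))%:M) *m (Bs - (sigs i)%:M) *m w = phi *: w) ->
  (sigs ord0 - sigs i) * mxcoord us ord0 (split_vec i) =
  phi * mxcoord us ord0 (split_vec i.-1).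
Proof.
move=> i_gt0 [w [w_neq0 /in_U_mxcoord[us_gt u_lt]] w_eig].
have w_line := split_vec_line us_gt u_lt.
have a_neq0 : mxcoord split_fam i w != 0.
  by apply: contraNneq w_neq0 => a0; rewrite w_line a0 scale0r.
have x_eig : (B - (sig (inord i.-1))%:M) *m (Bs - (sigs i)%:M) *m split_vec i =
             phi *: split_vec i.
  apply: (scalerI a_neq0); rewrite scalemxAr -w_line w_eig [in LHS]w_line.
  by rewrite !scalerA mulrC.
have [b y_low] := split_vec_lowering i_gt0.
have b_phi : b = phi.
  move: x_eig; rewrite -mulmxA y_low -scalemxAr -split_vec_pred // => /eqP.
  rewrite -subr_eq0 -scalerBl scaler_eq0 (negbTE (split_vec_neq0 i)) orbF subr_eq0.
  by move/eqP.
have := congr1 (mxcoord us ord0) y_low.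
by rewrite mxcoord_mulBscalar mxcoord_us_Bs -mulrBl linearZ b_phi.
Qed.

Lemma split_seq_prod (phi : 'I_n -> K) : is_first_split_seq B Bs sig sigs phi ->
  forall i, (i <= d)%N ->
  mxcoord us ord0 (split_vec i) * \prod_(1 <= h < i.+1) (sigs ord0 - sigs (inord h)) =
  \prod_(1 <= h < i.+1) phi (inord h).
Proof.
move=> phi_split; elim=> [|i IHi] i_lt_d.
  by rewrite !big_geq // mulr1 (mxcoord_basis us_basis) eqxx.
have i1_gt0 : (0 < (inord i.+1 : 'I_n))%N by rewrite inordK.
have := split_seq_step i1_gt0 (phi_split _ i1_gt0); rewrite inordK // => step.
rewrite big_nat_recr // [X in _ = X]big_nat_recr //.
rewrite mulrCA [_ * (sigs ord0 - _)]mulrC step /= -IHi 1?ltnW //; ring.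
Qed.

Lemma split_seq_trace (phi : 'I_n -> K) : is_first_split_seq B Bs sig sigs phi ->
  \tr (prim_idem B sig ord_max *m prim_idem Bs sigs ord0) *
  \prod_(h < n | (h < d)%N) (sig ord_max - sig h) *
  \prod_(h < n | (0 < h)%N) (sigs ord0 - sigs h) =
  \prod_(h < n | (0 < h)%N) phi h.
Proof.
move=> phi_split.
have trE : \tr (prim_idem B sig ord_max *m prim_idem Bs sigs ord0) =
           mxcoord us ord0 (u ord_max) * mxcoord u ord_max (us ord0).
  rewrite (mxtrace_mxcoord u_basis) (bigD1 ord_max) //= big1 ?addr0 => [|j j_max];
  rewrite -mulmxA (prim_idem_mxcoord sigs_inj us_eig us_neq0) -scalemxAr;
  rewrite (prim_idem_mxcoord sig_inj u_eig u_neq0) !linearZ /= (mxcoord_basis u_basis).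
    by rewrite eqxx mulr1.
  by rewrite (negbTE j_max) !mulr0.
have x_d : split_vec d = mxcoord u ord_max (split_vec d) *: u ord_max.
  rewrite {1}(mxcoord_expansion u_basis (split_vec d)) (bigD1 ord_max) //=.
  rewrite big1 ?addr0 // => j j_max; rewrite split_vec_u_lt ?scale0r //.
  rewrite ltn_neqAle -ltnS ltn_ord andbT.
  by apply: contra j_max => /eqP jd; apply/eqP/val_inj.
have := split_seq_prod phi_split (leqnn d).
rewrite {1}x_d linearZ /= split_vec_u big_nat_inord_geq1.
rewrite (big_nat_inord_geq1 _ (fun h => sigs ord0 - sigs h)).
rewrite (big_nat_inord_lt _ (fun h => sig ord_max - sig h)) // trE.
by move=> <-; ring.
Qed.

End SplitBasis.

Lemma leonard_system_rev (K : fieldType) d (A As : 'M[K]_d.+1) (th ths : 'I_d.+1 -> K) :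
  leonard_system A As th ths -> leonard_system A As (fun i => th (rev_ord i)) ths.
Proof.
have revE i : prim_idem A (fun i => th (rev_ord i)) i = prim_idem A th (rev_ord i).
  exact: (prim_idem_comp A th i rev_ord_inj).
move=> [[[th_inj th_eig] ths_mf] [E_tri E_adj Es_tri Es_adj]].
split.
  by split=> //; split=> [|i]; [exact: inj_comp th_inj rev_ord_inj|exact: th_eig].
split=> // i j ij; rewrite !revE; [apply: E_tri | apply: E_adj];
  by move: ij; rewrite /=; have := ltn_ord i; have := ltn_ord j; lia.
Qed.

Lemma leonard_first_split_seq_trace (K : fieldType) d (B Bs : 'M[K]_d.+1)
    (sig sigs phi : 'I_d.+1 -> K) :
  leonard_system B Bs sig sigs -> is_first_split_seq B Bs sig sigs phi ->
  \tr (prim_idem B sig ord_max *m prim_idem Bs sigs ord0) *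
  \prod_(h < d.+1 | (h < d)%N) (sig ord_max - sig h) *
  \prod_(h < d.+1 | (0 < h)%N) (sigs ord0 - sigs h) =
  \prod_(h < d.+1 | (0 < h)%N) phi h.
Proof.
move=> [[[sig_inj sig_eig] [sigs_inj sigs_eig]] [E_tri _ Es_tri Es_adj]].
have [u [u_eig u_neq0]] := eigenvalues_eigvecs sig_eig.
have [us [us_eig us_neq0]] := eigenvalues_eigvecs sigs_eig.
have sandwich_u := prim_idem_sandwich_eq0 sig_inj u_eig u_neq0.
have sandwich_us := prim_idem_sandwich_eq0 sigs_inj us_eig us_neq0.
apply: (split_seq_trace sig_inj sigs_inj u_eig u_neq0 us_eig us_neq0)
  => [k j kj|k j kj|j k jk].
- by apply/eqP; rewrite -sandwich_u E_tri.
- by apply/eqP; rewrite -sandwich_us Es_tri.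
- by rewrite -sandwich_us Es_adj // jk orbT.
Qed.

Theorem theorem23p7 (K : fieldType) (d : nat) (A As : 'M[K]_d.+1)
    (th ths : 'I_d.+1 -> K) (phi : 'I_d.+1 -> K) :
  leonard_system A As th ths ->
  is_second_split_seq A As th ths phi ->
  (\tr (prim_idem A th ord0 *m prim_idem As ths ord0))^-1 =
    (\prod_(h < d.+1 | (0 < h)%N) (th ord0 - th h)) *
    (\prod_(h < d.+1 | (0 < h)%N) (ths ord0 - ths h)) /
    \prod_(i < d.+1 | (0 < i)%N) phi i.
Proof.
move=> LS phi_split; have [[[th_inj _] [ths_inj _]] _] := LS.
have etaE : \prod_(h < d.+1 | (0 < h)%N) (th ord0 - th h) =
            \prod_(h < d.+1 | (h < d)%N) (th ord0 - th (rev_ord h)).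
  by rewrite (reindex_inj rev_ord_inj); apply: eq_bigl => h; rewrite /= subSS subn_gt0.
have rev_max : rev_ord ord_max = ord0 :> 'I_d.+1 by apply: val_inj; rewrite /= subnn.
have := leonard_first_split_seq_trace (leonard_system_rev LS) phi_split.
rewrite prim_idem_comp ?rev_max -?etaE => [<-|]; last exact: rev_ord_inj.
set t := \tr _; set e := \prod_(h < _ | _) (th _ - _).
set es := \prod_(h < _ | _) (ths _ - _).
rewrite -[t * e * es]mulrA invfM mulrCA divff ?mulr1 //.
by rewrite mulf_neq0 // prod_subr_neq0.
Qed.
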